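(* In the setting of the context, for every resolution $\mathcal{A}$ and every politeral unit $J$, the set of politeral units $I$ for which there is a visibility chain in $\mathcal{A}$ with head $I$ and tail $J$ is countable.
   Context: Formulas are built from atoms by $\neg$ (on atoms only), binary $\wedge,\vee$ and unary $!$ (branching recurrence) and $?$ (branching corecurrence). Units. Fix a formula $\mathbb{F}_0$. Oformulas are occurrences of subformulas of $\mathbb{F}_0$. Politerals are occurrences of literals $P$ or $\neg P$ not in the scope of $\neg$. The modal depth of an oformula is the number of its proper superoccurrences of the form $!E$ or $?E$. A unit is $E[\vec x]$, with $E$ an oformula and $\vec x$ a tuple of infinite bitstrings of length equal to the modal depth of $E$. Parenthood: $G_i[\vec x]$ ($i=0,1$) are the children of $(G_0\wedge G_1)[\vec x]$ and of $(G_0\vee G_1)[\vec x]$; the $G[\vec x,y]$ for all infinite bitstrings $y$ are the children of $!G[\vec x]$ and of $?G[\vec x]$. Subunit and superunit are the reflexive-transitive closures of child and its converse. The $\mathbb{F}_0$-origin $\tilde E$ of $E[\vec x]$ is $E$. Politeral, $!$- and $?$-units are defined by their origin. The smallest common superunit of two units is their common superunit lying below all common superunits. Resolutions and driving. A resolution $\mathcal{A}$ maps each $!$-unit $!\tilde E[\vec y]$ to ''Unresolved'' or to an infinite bitstring $x$. In the latter case it is $\mathcal{A}$-resolved with resolvent $\tilde E[\vec y,x]$. $E$ drives $G$ through $H$ iff $H$ is the smallest common superunit of $E,G$ and no proper $?$-superunit of $E$ is a subunit of $H$. $E$ $\mathcal{A}$-strictly drives $G$ iff, for some $H$, $E$ drives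 $G$ through $H$ and every $!$-unit that is a proper superunit of $E$ and a subunit of $H$ is $\mathcal{A}$-resolved with $E$ a subunit of its resolvent. Funits. A funit is $E[\vec w]$ with finite bitstrings $\vec w$. Addresses: $\mathbb{F}_0[\,]$ has the empty address; if $\alpha$ is the address of $E[\vec w]$, then $G_i[\vec w]$ has address $\alpha i.$ and $G[\vec w,u]$ has address $\alpha u.$. The height of a funit is the maximal length of its bitstrings (or $0$), and it is regular iff all its bitstrings have equal length. Making the numeric move $a$ in a funit with address $\alpha$ means making the move $\alpha a$. Projections. For a run $\Theta$ and a string $\alpha$, $\Theta^\alpha$ keeps the labmoves whose move begins with $\alpha$ and deletes that prefix. $\Theta^{\preceq y}$ keeps the labmoves $\wp\,u.\beta$ with $u$ a finite prefix of $y$ and deletes ''$u.$''. The projection of $\Omega$ on $\mathbb{F}_0[\,]$ is $\Omega$; on children it is $\Theta^{i.}$ for $\wedge/\vee$-units and $\Theta^{\preceq y}$ for $!/?$-units, where $\Theta$ is the projection on the parent. The run $\Omega$. A funit is $\Phi$-active iff position $\Phi$ contains a move $\alpha\beta$ with $\alpha$ its address. A $\Phi$-prompt is a regular politeral funit whose tuple is empty or whose height is the least integer exceeding the heights of all $\Phi$-active funits. $\Omega$ is produced by a play in rounds. In each round, with $\Phi$ the position at the round's start, player $\bot$ lists the $\Phi$-prompts lexicographically and, for each in turn, makes in it the numeric move $a$, where $a$ is the least natural number not yet made as a numeric move by either player. Then the adversary $\top$ (an arbitrary HPM) makes at most one move. $\Omega$ is assumed legal: every move has the form $\alpha a$ with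 $\alpha$ the address of a politeral funit and $a$ a decimal numeral. Opposite politeral units $L,M$: $\tilde L,\tilde M$ are literals one of which is the negation of the other, and for each $\wp\in\{\top,\bot\}$ the set of $\wp$-labeled moves in the projection of $\Omega$ on $L$ equals the set of $\neg\wp$-labeled moves in the projection on $M$. A visibility chain in $\mathcal{A}$ is a nonempty sequence $L_1,M_1,\dots,L_n,M_n$ of politeral units with each $L_i,M_i$ opposite and, for $i<n$, $M_i$ $\mathcal{A}$-strictly driving $L_{i+1}$. Its head is $L_1$ and its tail is $M_n$. *)

From Stdlib Require Import Arith List Ascii Relations Sorted.
Import ListNotations.
Open Scope char_scope.

Inductive formula : Type :=
| Atom    : nat -> formula
| NegAtom : nat -> formula
| And     : formula -> formula -> formula
| Or      : formula -> formula -> formula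
| Ofc     : formula -> formula        (* ! E  (branching recurrence) *)
| Why     : formula -> formula.       (* ? E  (branching corecurrence) *)

(* Occurrences of subformulas of F0 are given by paths from the root. *)
Inductive dir : Type := dL | dR | dD.  (* left / right child, or child of !,? *)

Fixpoint sub (F : formula) (p : list dir) : option formula :=
  match p with
  | [] => Some F
  | d :: p' =>
      match d, F with
      | dL, And G _ | dL, Or G _ => sub G p'
      | dR, And _ H | dR, Or _ H => sub H p'
      | dD, Ofc G | dD, Why G => sub G p'
      | _, _ => None
      end
  end.

Definition is_oformula (F0 : formula) (p : list dir) : Prop :=
  exists E, sub F0 p = Some E.

Definition is_modal (o : option formula) : bool :=
  match o with Some (Ofc _) | Some (Why _) => true | _ => false end.

Definition is_literal (o : option formula) : bool :=
  match o with Some (Atom _) | Some (NegAtom _) => true | _ => false end.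

(* modal depth: number of proper superoccurrences of the form !E or ?E *)
Definition mdepth (F0 : formula) (p : list dir) : nat :=
  length (filter (fun i => is_modal (sub F0 (firstn i p))) (seq 0 (length p))).

Definition bitstream := nat -> bool.

Record unt : Type := U { upath : list dir; utup : list bitstream }.

Definition is_unit (F0 : formula) (u : unt) : Prop :=
  is_oformula F0 (upath u) /\ length (utup u) = mdepth F0 (upath u).

Definition politeral_unit (F0 : formula) (u : unt) : Prop :=
  is_unit F0 u /\ is_literal (sub F0 (upath u)) = true.

Definition bang_unit (F0 : formula) (u : unt) : Prop :=
  is_unit F0 u /\ exists E, sub F0 (upath u) = Some (Ofc E).

Definition why_unit (F0 : formula) (u : unt) : Prop :=
  is_unit F0 u /\ exists E, sub F0 (upath u) = Some (Why E).

Definition child (F0 : formula) (c par : unt) : Prop :=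
  is_unit F0 c /\ is_unit F0 par /\
  ((exists d, (d = dL \/ d = dR) /\ upath c = upath par ++ [d] /\ utup c = utup par)
   \/ (exists y, upath c = upath par ++ [dD] /\ utup c = utup par ++ [y])).

(* subunit E H : E is a subunit of H (H a superunit of E) *)
Definition subunit (F0 : formula) : unt -> unt -> Prop :=
  clos_refl_trans unt (child F0).

Definition scs (F0 : formula) (E G H : unt) : Prop :=
  subunit F0 E H /\ subunit F0 G H /\
  forall H', subunit F0 E H' -> subunit F0 G H' -> subunit F0 H H'.

(* None = "Unresolved"; only values on !-units are relevant. *)
Definition resolution := unt -> option bitstream.

Definition resolvent (K : unt) (x : bitstream) : unt :=
  U (upath K ++ [dD]) (utup K ++ [x]).

Definition drives (F0 : formula) (E G H : unt) : Prop :=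
  scs F0 E G H /\
  forall K, why_unit F0 K -> subunit F0 E K -> K <> E -> ~ subunit F0 K H.

Definition strictly_drives (F0 : formula) (A : resolution) (E G : unt) : Prop :=
  exists H, drives F0 E G H /\
  forall K, bang_unit F0 K -> subunit F0 E K -> K <> E -> subunit F0 K H ->
    exists x, A K = Some x /\ subunit F0 E (resolvent K x).

Record funt : Type := FU { fpath : list dir; ftup : list (list bool) }.

Definition is_funit (F0 : formula) (f : funt) : Prop :=
  is_oformula F0 (fpath f) /\ length (ftup f) = mdepth F0 (fpath f).

Definition bits (u : list bool) : list ascii :=
  map (fun b : bool => if b then "1" else "0") u.

Fixpoint addr (p : list dir) (w : list (list bool)) : list ascii :=
  match p with
  | [] => []
  | dL :: p' => "0" :: "." :: addr p' w
  | dR :: p' => "1" :: "." :: addr p' w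
  | dD :: p' =>
      match w with
      | u :: w' => bits u ++ "." :: addr p' w'
      | [] => "." :: addr p' []   (* unreachable for funits *)
      end
  end.

Definition faddr (f : funt) : list ascii := addr (fpath f) (ftup f).

Definition height (f : funt) : nat := fold_right Nat.max 0 (map (@length bool) (ftup f)).

Definition regular (f : funt) : Prop :=
  forall u v, In u (ftup f) -> In v (ftup f) -> length u = length v.

Definition politeral_funit (F0 : formula) (f : funt) : Prop :=
  is_funit F0 f /\ is_literal (sub F0 (fpath f)) = true.

Inductive player : Type := Top | Bot.
Definition negp (p : player) : player := match p with Top => Bot | Bot => Top end.

Definition move := list ascii.
Definition labmove := (player * move)%type.

(* canonical decimal numeral of a natural number *)
Fixpoint dec_aux (fuel n : nat) (acc : list ascii) : list ascii :=
  match fuel with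
  | 0 => acc
  | S f =>
      let acc' := ascii_of_nat (48 + Nat.modulo n 10) :: acc in
      if Nat.ltb n 10 then acc' else dec_aux f (Nat.div n 10) acc'
  end.
Definition dec (n : nat) : list ascii := dec_aux (S n) n [].

Definition legal_move (F0 : formula) (m : move) : Prop :=
  exists f a, politeral_funit F0 f /\ m = faddr f ++ dec a.

Definition position := list labmove.

Definition used (F0 : formula) (Phi : position) (a : nat) : Prop :=
  exists lm f, In lm Phi /\ politeral_funit F0 f /\ snd lm = faddr f ++ dec a.

Definition least_unused (F0 : formula) (Phi : position) (a : nat) : Prop :=
  ~ used F0 Phi a /\ forall b, b < a -> used F0 Phi b.

Definition active (F0 : formula) (Phi : position) (f : funt) : Prop :=
  is_funit F0 f /\ exists lm beta, In lm Phi /\ snd lm = faddr f ++ beta.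

Definition prompt_height (F0 : formula) (Phi : position) (h : nat) : Prop :=
  (forall f, active F0 Phi f -> height f < h) /\
  (forall h', (forall f, active F0 Phi f -> height f < h') -> h <= h').

Definition prompt (F0 : formula) (Phi : position) (f : funt) : Prop :=
  politeral_funit F0 f /\ regular f /\
  (ftup f = [] \/ exists h, prompt_height F0 Phi h /\ height f = h).

Fixpoint lex_lt (s t : list ascii) : Prop :=
  match s, t with
  | [], _ :: _ => True
  | _, [] => False
  | a :: s', b :: t' =>
      nat_of_ascii a < nat_of_ascii b \/ (a = b /\ lex_lt s' t')
  end.

Fixpoint bot_seq (F0 : formula) (Phi : position) (ps : list funt)
    (bm : list labmove) : Prop :=
  match ps, bm with
  | [], [] => True
  | f :: ps', m :: bm' =>
      exists a, least_unused F0 Phi a /\ m = (Bot, faddr f ++ dec a) /\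
                bot_seq F0 (Phi ++ [m]) ps' bm'
  | _, _ => False
  end.

Definition bot_round (F0 : formula) (Phi : position) (bm : list labmove) : Prop :=
  exists ps : list funt,
    (forall f, In f ps <-> prompt F0 Phi f) /\
    StronglySorted (fun f g => lex_lt (faddr f) (faddr g)) ps /\
    bot_seq F0 Phi ps bm.

(* Phi k is the position at the start of round k of the play producing Omega *)
Definition is_play (F0 : formula) (Phi : nat -> position) : Prop :=
  Phi 0 = [] /\
  forall k, exists bm, bot_round F0 (Phi k) bm /\
    (Phi (S k) = Phi k ++ bm \/
     exists m, Phi (S k) = Phi k ++ bm ++ [(Top, m)]).

Definition legal_play (F0 : formula) (Phi : nat -> position) : Prop :=
  forall k lm, In lm (Phi k) -> legal_move F0 (snd lm).

(* Omega, as a set of labmoves *)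
Definition omega (Phi : nat -> position) (lm : labmove) : Prop :=
  exists k, In lm (Phi k).

Definition is_prefix (u : list bool) (y : bitstream) : Prop :=
  forall i, i < length u -> nth i u false = y i.

Fixpoint proj (S : labmove -> Prop) (p : list dir) (xs : list bitstream)
    : labmove -> Prop :=
  match p with
  | [] => S
  | dL :: p' => proj (fun lm => S (fst lm, "0" :: "." :: snd lm)) p' xs
  | dR :: p' => proj (fun lm => S (fst lm, "1" :: "." :: snd lm)) p' xs
  | dD :: p' =>
      match xs with
      | y :: xs' =>
          proj (fun lm => exists u, is_prefix u y /\
                                    S (fst lm, bits u ++ "." :: snd lm)) p' xs'
      | [] => fun _ => False
      end
  end.

Definition proj_unit (Phi : nat -> position) (u : unt) : labmove -> Prop :=
  proj (omega Phi) (upath u) (utup u).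

Definition complementary (o1 o2 : option formula) : Prop :=
  exists n, (o1 = Some (Atom n) /\ o2 = Some (NegAtom n)) \/
            (o1 = Some (NegAtom n) /\ o2 = Some (Atom n)).

Definition opposite (F0 : formula) (Phi : nat -> position) (L M : unt) : Prop :=
  politeral_unit F0 L /\ politeral_unit F0 M /\
  complementary (sub F0 (upath L)) (sub F0 (upath M)) /\
  forall (w : player) (m : move),
    proj_unit Phi L (w, m) <-> proj_unit Phi M (negp w, m).

(* visibility chain L1,M1,...,Ln,Mn given as the list of pairs (Li,Mi) *)
Fixpoint chain_ok (F0 : formula) (Phi : nat -> position) (A : resolution)
    (c : list (unt * unt)) : Prop :=
  match c with
  | [] => True
  | (L, M) :: c' =>
      opposite F0 Phi L M /\
      (match c' with
       | [] => True
       | (L', _) :: _ => strictly_drives F0 A M L'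
       end) /\
      chain_ok F0 Phi A c'
  end.

Definition visibility_chain (F0 : formula) (Phi : nat -> position) (A : resolution)
    (I J : unt) : Prop :=
  exists c : list (unt * unt),
    c <> [] /\ chain_ok F0 Phi A c /\
    fst (hd (I, I) c) = I /\ snd (last c (J, J)) = J.

Definition countable {T : Type} (S : T -> Prop) : Prop :=
  exists f : T -> nat, forall x y, S x -> S y -> f x = f y -> x = y.

(* The idea: a visibility chain L1,M1,...,Ln,Mn is completely determined by
   its tail Mn together with the finite "code" listing the paths of the L_i,
   of the M_i, and of the units H_i through which M_i strictly drives L_(i+1).
   Codes form a countable set, so the heads are countable.

   Determinism is shown link by link, reading the chain backwards:
   - units are determined by paths once a superunit is known: a subunit
     extends the path and the tuple of its superunit, so H_i is fixed by
     L_(i+1) and its path (superunit_unique);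
   - M_i is fixed by H_i and its path: below H_i every modal superunit of M_i
     is a !-unit resolved towards M_i, which pins down each further
     bitstring of M_i (driver_unique);
   - L_i is fixed by its opposite M_i and its path: in every round bot makes a
     fresh numeric move in each politeral unit cut at the current prompt
     height, these heights grow without bound, and freshness makes such a
     move identifiable, so the projection of the run on L_i reveals every
     bit of L_i's tuple (politeral_unit_determined). *)
From Stdlib Require Import Arith List Ascii Relations Lia Classical Wf_nat
  FunctionalExtensionality.
From Stdlib Require Cantor ClassicalEpsilon.
Import ListNotations.
Open Scope char_scope.

(* Number of modal steps ([dD]) along a path. For an oformula occurrence this
   is its modal depth, hence the length of the tuple of any of its units. *)
Fixpoint modal_steps (p : list dir) : nat :=
  match p with [] => 0 | dD :: p' => S (modal_steps p') | _ :: p' => modal_steps p' end.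

Lemma modal_steps_app p q : modal_steps (p ++ q) = modal_steps p + modal_steps q.
Proof. induction p as [|d p IH]; [reflexivity|]; destruct d; simpl; auto. Qed.

(* [sub] recurses on the formula, so even the empty path needs a case split. *)
Lemma sub_nil F : sub F [] = Some F.
Proof. destruct F; reflexivity. Qed.

Lemma sub_app F p q :
  sub F (p ++ q) = match sub F p with Some G => sub G q | None => None end.
Proof.
  revert F; induction p as [|d p IH]; intros F.
  - rewrite sub_nil. reflexivity.
  - destruct d, F; simpl; auto.
Qed.

Lemma oformula_prefix F0 p q : is_oformula F0 (p ++ q) -> is_oformula F0 p.
Proof.
  intros [E HE]. rewrite sub_app in HE.
  destruct (sub F0 p) as [G|] eqn:HG; [exists G; exact HG | discriminate].
Qed.

(* Shifting the index range in the count defining [mdepth]. *)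
Lemma filter_map_S (f : nat -> bool) l :
  length (filter f (map S l)) = length (filter (fun i => f (S i)) l).
Proof. induction l as [|i l IH]; simpl; auto. destruct (f (S i)); simpl; auto. Qed.

Lemma mdepth_modal_steps F p : is_oformula F p -> mdepth F p = modal_steps p.
Proof.
  unfold mdepth. revert F; induction p as [|d p IH]; intros F [E HE]; [reflexivity|].
  simpl length. rewrite <- seq_shift. cbn [seq filter firstn]. rewrite sub_nil.
  destruct d, F; simpl in HE; try discriminate; cbn [is_modal length modal_steps];
    rewrite filter_map_S; simpl; rewrite (IH _ (ex_intro _ E HE)); reflexivity.
Qed.

Lemma unit_tuple_length F0 X : is_unit F0 X -> length (utup X) = modal_steps (upath X).
Proof. intros [Hv HL]. rewrite HL. apply mdepth_modal_steps; auto. Qed.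

Lemma funit_tuple_length F0 f : is_funit F0 f -> length (ftup f) = modal_steps (fpath f).
Proof. intros [Hv HL]. rewrite HL. apply mdepth_modal_steps; auto. Qed.

Lemma mk_unit F0 p t : is_oformula F0 p -> length t = modal_steps p -> is_unit F0 (U p t).
Proof. intros Hv HL. split; auto. simpl. rewrite HL. symmetry. apply mdepth_modal_steps; auto. Qed.

Lemma firstn_app_short {T} n (l1 l2 : list T) :
  n <= length l1 -> firstn n (l1 ++ l2) = firstn n l1.
Proof.
  intros Hn. rewrite firstn_app. replace (n - length l1) with 0 by lia.
  rewrite firstn_O, app_nil_r. reflexivity.
Qed.

Lemma firstn_S_nth {T} (l : list T) i d : i < length l ->
  firstn (S i) l = firstn i l ++ [nth i l d].
Proof.
  revert i; induction l as [|a l IH]; intros i Hi; simpl in *; [lia|].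
  destruct i; simpl; auto. rewrite IH by lia. reflexivity.
Qed.

Lemma subunit_prefix F0 X Y : subunit F0 X Y ->
  exists r s, upath X = upath Y ++ r /\ utup X = utup Y ++ s.
Proof.
  induction 1 as [X Y Hc | X | X Y Z _ IH1 _ IH2].
  - destruct Hc as (_ & _ & [[d (_ & Hp & Ht)] | [y (Hp & Ht)]]).
    + exists [d], []. rewrite app_nil_r. auto.
    + exists [dD], [y]. auto.
  - exists [], []. rewrite !app_nil_r. auto.
  - destruct IH1 as (r1 & s1 & Hp1 & Ht1), IH2 as (r2 & s2 & Hp2 & Ht2).
    exists (r2 ++ r1), (s2 ++ s1). rewrite Hp1, Ht1, Hp2, Ht2, !app_assoc. auto.
Qed.

Lemma prefix_subunit F0 X Y r s : is_unit F0 X -> is_unit F0 Y ->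
  upath X = upath Y ++ r -> utup X = utup Y ++ s -> subunit F0 X Y.
Proof.
  revert X s. induction r as [|d r IH] using rev_ind; intros X s HX HY Hp Ht.
  - assert (s = []) as ->.
    { apply unit_tuple_length in HX, HY.
      rewrite Hp, Ht, app_nil_r, length_app in HX. destruct s; simpl in *; auto; lia. }
    rewrite app_nil_r in *. destruct X, Y; simpl in *; subst. apply rt_refl.
  - pose proof (unit_tuple_length _ _ HX) as HcX.
    pose proof (unit_tuple_length _ _ HY) as HcY.
    rewrite Hp, Ht, length_app, !modal_steps_app in HcX. simpl in HcX.
    assert (Hv : is_oformula F0 (upath Y ++ r)).
    { destruct HX as [Hv _]. rewrite Hp, app_assoc in Hv. eapply oformula_prefix; eauto. }
    destruct d.
    1, 2: assert (Hmid : is_unit F0 (U (upath Y ++ r) (utup X)))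
      by (apply mk_unit; auto; rewrite Ht, length_app, modal_steps_app; simpl in *; lia);
      apply rt_trans with (U (upath Y ++ r) (utup X));
      [ apply rt_step; split; [exact HX | split; [exact Hmid |]];
        left; eexists; split; cycle 1;
        [simpl; rewrite Hp, app_assoc; split; reflexivity | auto]
      | apply (IH _ s); auto ].
    destruct (exists_last (l := s)) as [s' [y ->]].
    { intros ->. simpl in HcX. lia. }
    rewrite length_app in HcX; simpl in HcX.
    apply rt_trans with (U (upath Y ++ r) (utup Y ++ s')).
    + apply rt_step. split; [auto | split].
      * apply mk_unit; auto. rewrite length_app, modal_steps_app. lia.
      * right. exists y. simpl. rewrite Hp, Ht, !app_assoc. auto.
    + apply (IH _ s'); auto. apply mk_unit; auto. rewrite length_app, modal_steps_app. lia.
Qed.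

Lemma subunit_unit F0 X Y : subunit F0 X Y -> is_unit F0 X -> is_unit F0 Y.
Proof.
  induction 1 as [X Y Hc | X | X Y Z _ IH1 _ IH2]; auto.
  intros _. apply Hc.
Qed.

Lemma superunit_unique F0 X H H' : subunit F0 X H -> subunit F0 X H' ->
  is_unit F0 H -> is_unit F0 H' -> upath H = upath H' -> H = H'.
Proof.
  intros S1 S2 U1 U2 Ep.
  destruct (subunit_prefix _ _ _ S1) as (r1 & s1 & _ & E1).
  destruct (subunit_prefix _ _ _ S2) as (r2 & s2 & _ & E2).
  apply unit_tuple_length in U1, U2.
  destruct H as [ph th], H' as [ph' th']. simpl in *. subst ph'. f_equal.
  rewrite E1 in E2.
  assert (Hth : forall t s : list bitstream, firstn (length t) (t ++ s) = t).
  { intros t s. rewrite firstn_app_short, firstn_all; auto. }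
  rewrite <- (Hth th s1), <- (Hth th' s2), E2. f_equal. lia.
Qed.

(* The resolution condition in strict driving: every proper !-superunit of E
   below H is resolved towards E. *)
Definition resolved_below (F0 : formula) (A : resolution) (E H : unt) : Prop :=
  forall K, bang_unit F0 K -> subunit F0 E K -> K <> E -> subunit F0 K H ->
    exists x, A K = Some x /\ subunit F0 E (resolvent K x).

Lemma modal_step_at q i : i < modal_steps q ->
  exists r1 r2, q = r1 ++ dD :: r2 /\ modal_steps r1 = i.
Proof.
  revert i; induction q as [|d q IH]; intros i Hi; simpl in *; [lia|].
  destruct d.
  1, 2: destruct (IH i Hi) as (r1 & r2 & -> & <-); eexists (_ :: r1), r2; split; reflexivity.
  destruct i as [|i]; [exists [], q; auto|].
  destruct (IH i ltac:(lia)) as (r1 & r2 & -> & <-). exists (dD :: r1), r2. auto.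
Qed.

Lemma modal_ancestor F0 X r1 r2 (K := U r1 (firstn (modal_steps r1) (utup X))) :
  is_unit F0 X -> upath X = r1 ++ dD :: r2 ->
  subunit F0 X K /\ K <> X /\ (bang_unit F0 K \/ why_unit F0 K) /\
  forall H, subunit F0 X H -> length (utup H) <= modal_steps r1 -> subunit F0 K H.
Proof.
  intros HX Hp.
  pose proof (unit_tuple_length _ _ HX) as LX.
  rewrite Hp, modal_steps_app in LX. simpl in LX.
  assert (Hq : is_oformula F0 (r1 ++ dD :: r2)) by (rewrite <- Hp; apply HX).
  assert (HK : is_unit F0 K).
  { apply mk_unit; [eapply oformula_prefix; eauto|]. rewrite length_firstn. lia. }
  split; [|split; [|split]].
  - apply (prefix_subunit _ _ _ (dD :: r2) (skipn (modal_steps r1) (utup X))); auto.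
    simpl. rewrite firstn_skipn. auto.
  - intros E. apply (f_equal (fun Y => length (upath Y))) in E.
    simpl in E. rewrite Hp, length_app in E. simpl in E. lia.
  - destruct Hq as [E HE]. rewrite sub_app in HE.
    destruct (sub F0 r1) as [[]|] eqn:Hr1; try discriminate.
    + left. split; eauto.
    + right. split; eauto.
  - intros H SXH LH.
    pose proof (unit_tuple_length _ _ (subunit_unit _ _ _ SXH HX)) as LHc.
    destruct (subunit_prefix _ _ _ SXH) as (r & s & Hr & Hs).
    assert (HtK : utup K = utup H ++ firstn (modal_steps r1 - length (utup H)) s).
    { simpl. rewrite Hs, firstn_app, firstn_all2 by lia. reflexivity. }
    rewrite Hp in Hr. destruct (app_eq_app _ _ _ _ Hr) as [l [[E1 E2] | [E1 E2]]].
    + exact (prefix_subunit _ _ _ _ _ HK (subunit_unit _ _ _ SXH HX) E1 HtK).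
    + destruct l as [|d l].
      * rewrite app_nil_r in E1.
        eapply (prefix_subunit _ _ _ [] _ HK (subunit_unit _ _ _ SXH HX));
          [simpl; rewrite E1, app_nil_r; reflexivity | exact HtK].
      * simpl in E2. injection E2 as <- _.
        rewrite E1, modal_steps_app in LHc. simpl in LHc. lia.
Qed.

Lemma resolvent_component F0 X K x d : subunit F0 X (resolvent K x) ->
  nth (length (utup K)) (utup X) d = x.
Proof.
  intros S. destruct (subunit_prefix _ _ _ S) as (_ & s & _ & Ht). simpl in Ht.
  rewrite Ht, <- app_assoc, app_nth2 by lia. rewrite Nat.sub_diag. reflexivity.
Qed.

(* The
   tuples agree on H's part, and below H each further component is fixed by
   the resolution of the modal ancestor at that depth (a ?-ancestor is
   excluded by the definition of driving). *)
Lemma driver_unique F0 A M M' G H :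
  is_unit F0 M -> is_unit F0 M' -> upath M = upath M' ->
  drives F0 M G H -> drives F0 M' G H ->
  resolved_below F0 A M H -> resolved_below F0 A M' H -> M = M'.
Proof.
  intros HM HM' Ep [[SM _] Hwhy] [[SM' _] _] Hres Hres'.
  destruct (subunit_prefix _ _ _ SM) as (_ & s & _ & Hs).
  destruct (subunit_prefix _ _ _ SM') as (_ & s' & _ & Hs').
  pose proof (unit_tuple_length _ _ HM) as LM.
  pose proof (unit_tuple_length _ _ HM') as LM'.
  assert (Hlen : length (utup M) = length (utup M')) by congruence.
  assert (Hpre : forall i, i <= length (utup M) -> firstn i (utup M) = firstn i (utup M')).
  { induction i as [|i IH]; intros Hi; [reflexivity|].
    rewrite !(firstn_S_nth _ i ((fun _ => false) : bitstream)) by lia.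
    rewrite <- IH by lia. f_equal. f_equal.
    destruct (Nat.lt_ge_cases i (length (utup H))) as [Hlt | Hge].
    { rewrite Hs, Hs', !app_nth1 by lia. reflexivity. }
    destruct (modal_step_at (upath M) i) as (r1 & r2 & Hq & Hi1); [lia|].
    destruct (modal_ancestor _ _ _ _ HM Hq) as (SMK & NMK & HK & SKH).
    rewrite Ep in Hq.
    destruct (modal_ancestor _ _ _ _ HM' Hq) as (SMK' & NMK' & _ & _).
    rewrite Hi1, <- IH in SMK', NMK' by lia. rewrite Hi1 in SMK, NMK, SKH, HK.
    specialize (SKH _ SM ltac:(lia)).
    destruct HK as [HK | HK].
    - destruct (Hres _ HK SMK NMK SKH) as (x & Ax & Sx).
      destruct (Hres' _ HK SMK' NMK' SKH) as (x' & Ax' & Sx').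
      rewrite Ax in Ax'. injection Ax' as <-.
      apply resolvent_component with (d := fun _ => false) in Sx, Sx'.
      simpl in Sx, Sx'. rewrite length_firstn in Sx, Sx'.
      rewrite Nat.min_l in Sx, Sx' by lia. congruence.
    - exfalso. exact (Hwhy _ HK SMK NMK SKH). }
  destruct M as [pm tm], M' as [pm' tm']. simpl in *. subst pm'. f_equal.
  rewrite <- (firstn_all tm), <- (firstn_all tm'), <- Hlen. apply Hpre. lia.
Qed.

(* Addresses are dot-terminated sequences of dot-free blocks; decimal
   numerals and bitstrings contain no dot.  Hence a move "address ++ numeral"
   determines the numeral, and an address of a given path determines the
   tuple of bitstrings. *)
Lemma addr_dot_terminated p w : addr p w = [] \/ exists t, addr p w = t ++ ["."].
Proof.
  revert w; induction p as [|d p IH]; intros w; simpl; auto. right.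
  destruct d.
  - destruct (IH w) as [E | [t E]]; rewrite E; [exists ["0"] | exists ("0" :: "." :: t)]; auto.
  - destruct (IH w) as [E | [t E]]; rewrite E; [exists ["1"] | exists ("1" :: "." :: t)]; auto.
  - destruct w as [|u w].
    + destruct (IH []) as [E | [t E]]; rewrite E; [exists [] | exists ("." :: t)]; auto.
    + destruct (IH w) as [E | [t E]]; rewrite E; [exists (bits u) | exists (bits u ++ "." :: t)].
      * reflexivity.
      * rewrite <- app_assoc. reflexivity.
Qed.

Lemma dot_split t1 t2 d1 d2 : ~ In "." t1 -> ~ In "." t2 ->
  t1 ++ "." :: d1 = t2 ++ "." :: d2 -> t1 = t2 /\ d1 = d2.
Proof.
  revert t2; induction t1 as [|c t1 IH]; intros [|c' t2] N1 N2 E; simpl in E.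
  - injection E; auto.
  - injection E as <- _. destruct N2. left; auto.
  - injection E as -> _. destruct N1. left; auto.
  - injection E as <- E.
    destruct (IH t2) as [-> ->]; [intro; apply N1 | intro; apply N2 | |]; auto; right; auto.
Qed.

Lemma dot_split_last t1 t2 d1 d2 : ~ In "." d1 -> ~ In "." d2 ->
  t1 ++ "." :: d1 = t2 ++ "." :: d2 -> d1 = d2.
Proof.
  revert t2; induction t1 as [|c t1 IH]; intros [|c' t2] N1 N2 E; simpl in E.
  - injection E; auto.
  - injection E as <- E. destruct N1. rewrite E. apply in_or_app. right. left. auto.
  - injection E as -> E. destruct N2. rewrite <- E. apply in_or_app. right. left. auto.
  - injection E as _ E. eauto.
Qed.

Lemma dec_aux_digits fuel n acc x : In x (dec_aux fuel n acc) ->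
  In x acc \/ exists r, r < 10 /\ x = ascii_of_nat (48 + r).
Proof.
  revert n acc; induction fuel as [|f IH]; intros n acc H; simpl in H; auto.
  assert (Hd : exists r, r < 10 /\ ascii_of_nat (48 + n mod 10) = ascii_of_nat (48 + r)).
  { exists (n mod 10). split; auto. apply Nat.mod_upper_bound. lia. }
  destruct (Nat.ltb n 10).
  - destruct H as [<- | H]; auto.
  - destruct (IH _ _ H) as [[<- | H'] | H']; auto.
Qed.

Lemma dec_nodot a : ~ In "." (dec a).
Proof.
  intros H. destruct (dec_aux_digits _ _ _ _ H) as [[] | [r [Hr E]]].
  apply (f_equal nat_of_ascii) in E.
  rewrite nat_ascii_embedding in E by lia. vm_compute in E. lia.
Qed.

Lemma bits_nodot u : ~ In "." (bits u).
Proof. unfold bits. intros H. apply in_map_iff in H as [[] [E _]]; discriminate. Qed.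

Lemma bits_inj u w : bits u = bits w -> u = w.
Proof.
  revert w; induction u as [|b u IH]; intros [|b' w] E; simpl in E; try discriminate; auto.
  injection E as E1 E2. f_equal; auto. destruct b, b'; auto; discriminate.
Qed.

Lemma addr_numeral_eq p1 w1 p2 w2 a b :
  addr p1 w1 ++ dec b = addr p2 w2 ++ dec a -> dec b = dec a.
Proof.
  intros E. pose proof (dec_nodot a) as Na. pose proof (dec_nodot b) as Nb.
  destruct (addr_dot_terminated p1 w1) as [E1 | [t1 E1]],
           (addr_dot_terminated p2 w2) as [E2 | [t2 E2]];
    rewrite E1, E2 in E; simpl in E; auto.
  - destruct Nb. rewrite E, <- app_assoc. apply in_or_app. right. left. auto.
  - destruct Na. rewrite <- E, <- app_assoc. apply in_or_app. right. left. auto.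
  - rewrite <- !app_assoc in E. eapply dot_split_last; eauto.
Qed.

Lemma addr_inj p us ws : length us = modal_steps p -> length ws = modal_steps p ->
  addr p us = addr p ws -> us = ws.
Proof.
  revert us ws; induction p as [|d p IH]; intros us ws L1 L2 E; simpl in *.
  - destruct us, ws; simpl in *; auto; lia.
  - destruct d; [injection E; eauto | injection E; eauto |].
    destruct us as [|u us], ws as [|w ws]; simpl in *; try lia.
    destruct (dot_split _ _ _ _ (bits_nodot u) (bits_nodot w) E) as [E1 E2].
    apply bits_inj in E1. subst. f_equal. apply IH; auto.
Qed.

Lemma addr_length p : forall w u, length w <= modal_steps p -> In u w ->
  length u <= length (addr p w).
Proof.
  induction p as [|d p IH]; intros w u L Hin; simpl in *.
  - destruct w; simpl in *; [contradiction | lia].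
  - destruct d; simpl; [specialize (IH w u L Hin); lia | specialize (IH w u L Hin); lia |].
    destruct w as [|u0 w]; [contradiction|]. simpl in L.
    rewrite length_app. simpl. destruct Hin as [<- | Hin].
    + unfold bits. rewrite length_map. lia.
    + specialize (IH w u ltac:(lia) Hin). lia.
Qed.

Lemma proj_intro p : forall S xs us w m, length us = modal_steps p ->
  Forall2 is_prefix us xs -> S (w, addr p us ++ m) -> proj S p xs (w, m).
Proof.
  induction p as [|d p IH]; intros S xs us w m L F HS.
  - destruct us; simpl in *; [exact HS | lia].
  - destruct d; simpl in *; [apply (IH _ _ us); auto | apply (IH _ _ us); auto |].
    destruct us as [|u us]; simpl in L; [lia|]. inversion F; subst.
    apply (IH _ _ us); auto. exists u. rewrite <- app_assoc in HS. auto.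
Qed.

Lemma proj_elim p : forall S xs w m, proj S p xs (w, m) -> length xs = modal_steps p ->
  exists us, Forall2 is_prefix us xs /\ S (w, addr p us ++ m).
Proof.
  induction p as [|d p IH]; intros S xs w m H L.
  - destruct xs; simpl in *; [exists []; auto | lia].
  - destruct d; simpl in *; [exact (IH _ _ _ _ H L) | exact (IH _ _ _ _ H L) |].
    destruct xs as [|y xs]; [contradiction|]. simpl in L.
    destruct (IH _ _ _ _ H ltac:(lia)) as [us [F [u [Hu HS]]]].
    exists (u :: us). split; auto. simpl. rewrite <- app_assoc. exact HS.
Qed.

Lemma play_step F0 Phi : is_play F0 Phi -> forall k, exists bm T,
  bot_round F0 (Phi k) bm /\ Phi (S k) = Phi k ++ bm ++ T /\
  (T = [] \/ exists m, T = [(Top, m)]).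
Proof.
  intros [_ H] k. destruct (H k) as (bm & Hb & [E | [m E]]).
  - exists bm, []. rewrite app_nil_r. auto.
  - exists bm, [(Top, m)]. eauto.
Qed.

Lemma play_prefix F0 Phi : is_play F0 Phi ->
  forall k k', k <= k' -> exists Z, Phi k' = Phi k ++ Z.
Proof.
  intros HP k k' Hk. induction Hk as [|k' Hk IH].
  - exists []. rewrite app_nil_r. auto.
  - destruct IH as [Z EZ]. destruct (play_step _ _ HP k') as (bm & T & _ & E & _).
    exists (Z ++ bm ++ T). rewrite E, EZ, !app_assoc. auto.
Qed.

Definition dummy_move : labmove := (Top, []).


Lemma bot_seq_nth F0 ps : forall P bm, bot_seq F0 P ps bm ->
  forall n, n < length bm -> exists g a, nth n bm dummy_move = (Bot, faddr g ++ dec a) /\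
    least_unused F0 (P ++ firstn n bm) a.
Proof.
  induction ps as [|f ps IH]; intros P [|m bm] H n Hn; simpl in *; try lia; try contradiction.
  destruct H as (a & Ha & -> & H). destruct n as [|n].
  - exists f, a. rewrite app_nil_r. auto.
  - destruct (IH _ _ H n ltac:(lia)) as (g & b & E & Hb). exists g, b.
    rewrite <- app_assoc in Hb. auto.
Qed.

Lemma bot_seq_in F0 ps : forall P bm f, bot_seq F0 P ps bm -> In f ps ->
  exists n a, n < length bm /\ nth n bm dummy_move = (Bot, faddr f ++ dec a) /\
    least_unused F0 (P ++ firstn n bm) a.
Proof.
  induction ps as [|f0 ps IH]; intros P [|m bm] f H Hin; simpl in *; try contradiction.
  destruct H as (a & Ha & -> & H). destruct Hin as [<- | Hin].
  - exists 0, a. rewrite app_nil_r. split; [lia | auto].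
  - destruct (IH _ _ _ H Hin) as (n & b & Hn & E & Hb). exists (S n), b.
    rewrite <- app_assoc in Hb. split; [lia | auto].
Qed.

Lemma bot_moves_fresh F0 Phi : is_play F0 Phi -> forall K n s, n < length (Phi K) ->
  nth n (Phi K) dummy_move = (Bot, s) ->
  exists g b, s = faddr g ++ dec b /\ least_unused F0 (firstn n (Phi K)) b.
Proof.
  intros HP K. induction K as [|K IH]; intros n s Hn E.
  { destruct HP as [H0 _]. rewrite H0 in Hn. simpl in Hn. lia. }
  destruct (play_step _ _ HP K) as (bm & T & [ps (_ & _ & Hbs)] & EK & HT).
  rewrite EK in Hn, E |- *. rewrite !length_app in Hn.
  destruct (Nat.lt_ge_cases n (length (Phi K))) as [H1 | H1].
  { rewrite app_nth1 in E by lia. rewrite firstn_app_short by lia. auto. }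
  rewrite app_nth2 in E by lia.
  destruct (Nat.lt_ge_cases (n - length (Phi K)) (length bm)) as [H2 | H2].
  - rewrite app_nth1 in E by lia.
    destruct (bot_seq_nth _ _ _ _ Hbs _ H2) as (g & a & E2 & Ha).
    rewrite E in E2. injection E2 as ->. exists g, a. split; auto.
    rewrite firstn_app, firstn_all2, firstn_app_short by lia. exact Ha.
  - rewrite app_nth2 in E by lia. destruct HT as [-> | [m ->]]; simpl in *; [lia|].
    replace (n - length (Phi K) - length bm) with 0 in E by lia. discriminate.
Qed.

(* Freshness makes a numeric move of bot recognisable: any Bot move of the
   run carrying the same numeral is that very move, in the same funit. *)
Lemma fresh_move_unique F0 Phi k n f a g :
  is_play F0 Phi -> n < length (Phi k) -> nth n (Phi k) dummy_move = (Bot, faddr f ++ dec a) ->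
  least_unused F0 (firstn n (Phi k)) a -> politeral_funit F0 f -> politeral_funit F0 g ->
  omega Phi (Bot, faddr g ++ dec a) -> faddr g = faddr f.
Proof.
  intros HP Hn E0 [Hfresh _] Pf Pg [k1 Hk1].
  destruct (play_prefix _ _ HP k (Nat.max k k1) ltac:(lia)) as [Z1 EZ1].
  destruct (play_prefix _ _ HP k1 (Nat.max k k1) ltac:(lia)) as [Z2 EZ2].
  set (K := Nat.max k k1) in *.
  assert (Hin : In (Bot, faddr g ++ dec a) (Phi K)) by (rewrite EZ2; apply in_or_app; auto).
  destruct (In_nth _ _ dummy_move Hin) as (n1 & Hn1 & E1).
  assert (Hpre : firstn n (Phi K) = firstn n (Phi k)) by (rewrite EZ1; apply firstn_app_short; lia).
  assert (E0' : nth n (Phi K) dummy_move = (Bot, faddr f ++ dec a)) by (rewrite EZ1, app_nth1; auto).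
  assert (Hn' : n < length (Phi K)) by (rewrite EZ1, length_app; lia).
  assert (Hearlier : forall i j, i < j -> j <= length (Phi K) ->
            In (nth i (Phi K) dummy_move) (firstn j (Phi K))).
  { intros i j Hij Hj.
    assert (Hi : Nat.ltb i j = true) by (apply Nat.ltb_lt; exact Hij).
    replace (nth i (Phi K) dummy_move) with (nth i (firstn j (Phi K)) dummy_move)
      by (rewrite nth_firstn, Hi; reflexivity).
    apply nth_In. rewrite length_firstn. lia. }
  destruct (lt_eq_lt_dec n1 n) as [[Hlt | <-] | Hgt].
  - destruct Hfresh. exists (nth n1 (Phi K) dummy_move), g. rewrite <- Hpre.
    split; [apply Hearlier; lia | rewrite E1; auto].
  - rewrite E0' in E1. injection E1 as E1. symmetry. eapply app_inv_tail; eauto.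
  - destruct (bot_moves_fresh _ _ HP K n1 _ Hn1 E1) as (g' & b & Eg & [Hb _]).
    apply addr_numeral_eq in Eg. destruct Hb.
    exists (nth n (Phi K) dummy_move), f.
    split; [apply Hearlier; lia | rewrite E0', <- Eg; auto].
Qed.

Definition bit_prefix (h : nat) (x : bitstream) : list bool := map x (seq 0 h).

Lemma bit_prefix_length h x : length (bit_prefix h x) = h.
Proof. unfold bit_prefix. rewrite length_map, length_seq. reflexivity. Qed.

Lemma bit_prefix_is_prefix h x : is_prefix (bit_prefix h x) x.
Proof.
  intros i Hi. rewrite bit_prefix_length in Hi. unfold bit_prefix.
  rewrite (nth_indep _ false (x 0)) by (rewrite length_map, length_seq; lia).
  rewrite map_nth, seq_nth by lia. reflexivity.
Qed.

Lemma bit_prefixes_are_prefixes h xs : Forall2 is_prefix (map (bit_prefix h) xs) xs.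
Proof. induction xs; constructor; auto using bit_prefix_is_prefix. Qed.

Lemma height_bit_prefixes p h xs : xs <> [] -> height (FU p (map (bit_prefix h) xs)) = h.
Proof.
  unfold height; simpl. induction xs as [|x xs IH]; intros Hx; [congruence|].
  simpl. rewrite bit_prefix_length. destruct xs as [|x' xs]; [simpl; lia|].
  rewrite IH by discriminate. lia.
Qed.

(* Active funits are spelled out in moves of the position, so their heights
   are bounded and a prompt height always exists. *)
Lemma active_height_bound F0 P f : active F0 P f ->
  height f <= list_max (map (fun lm => length (snd lm)) P).
Proof.
  intros [Hf (lm & beta & Hin & E)].
  assert (Hlm : length (snd lm) <= list_max (map (fun lm => length (snd lm)) P)).
  { pose proof (proj1 (list_max_le _ _) (le_n (list_max (map (fun lm => length (snd lm)) P))))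
      as HF.
    rewrite Forall_forall in HF. apply HF, in_map_iff. eauto. }
  rewrite E, length_app in Hlm.
  assert (height f <= length (faddr f)); [|lia].
  apply list_max_le, Forall_forall. intros n Hn. apply in_map_iff in Hn as (u & <- & Hu).
  apply addr_length; auto. rewrite (funit_tuple_length _ _ Hf). lia.
Qed.

Lemma prompt_height_exists F0 P : exists h, prompt_height F0 P h.
Proof.
  set (Q := fun h => forall f, active F0 P f -> height f < h).
  assert (HQ : exists h, Q h).
  { exists (S (list_max (map (fun lm => length (snd lm)) P))).
    intros f Hf. apply active_height_bound in Hf. lia. }
  destruct (dec_inh_nat_subset_has_unique_least_element Q (fun n => classic (Q n)) HQ)
    as [h [[Hh Hmin] _]].
  exists h. split; auto.
Qed.

Lemma bot_moves_in_prompt F0 Phi p xs k h :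
  is_play F0 Phi -> politeral_unit F0 (U p xs) -> xs <> [] -> prompt_height F0 (Phi k) h ->
  exists n a, n < length (Phi (S k)) /\
    nth n (Phi (S k)) dummy_move = (Bot, faddr (FU p (map (bit_prefix h) xs)) ++ dec a) /\
    least_unused F0 (firstn n (Phi (S k))) a.
Proof.
  intros HP [[Hv HL] Hlit] Hne Hh.
  destruct (play_step _ _ HP k) as (bm & T & [ps (Hps & _ & Hbs)] & EK & HT).
  set (f := FU p (map (bit_prefix h) xs)).
  assert (Hf : prompt F0 (Phi k) f).
  { split; [|split].
    - split; auto. split; auto. simpl. rewrite length_map. auto.
    - intros u v Hu Hv'. simpl in Hu, Hv'. apply in_map_iff in Hu, Hv'.
      destruct Hu as [x [<- _]], Hv' as [y [<- _]]. rewrite !bit_prefix_length. auto.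
    - right. exists h. split; auto. apply height_bit_prefixes; auto. }
  apply Hps in Hf.
  destruct (bot_seq_in _ _ _ _ _ Hbs Hf) as (n & a & Hn & E & Ha).
  exists (length (Phi k) + n), a. rewrite EK. split; [|split].
  - rewrite !length_app. lia.
  - rewrite app_nth2 by lia. rewrite Nat.add_sub_swap, Nat.sub_diag by lia.
    rewrite app_nth1 by lia. exact E.
  - rewrite app_assoc, firstn_app_short by (rewrite length_app; lia).
    rewrite firstn_app, firstn_all2, Nat.add_sub_swap, Nat.sub_diag by lia. exact Ha.
Qed.

(* Prompt heights grow at least by one per round (when prompts with
   nonempty tuples exist), since bot's move makes the current cut active. *)
Lemma prompt_heights_grow F0 Phi p xs k h :
  is_play F0 Phi -> politeral_unit F0 (U p xs) -> xs <> [] ->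
  prompt_height F0 (Phi k) h -> k <= h.
Proof.
  intros HP HU Hne. revert h. induction k as [|k IH]; intros h Hh; [lia|].
  destruct (prompt_height_exists F0 (Phi k)) as [h0 Hh0].
  specialize (IH _ Hh0).
  destruct (bot_moves_in_prompt _ _ _ _ _ _ HP HU Hne Hh0) as (n & a & Hn & E & _).
  assert (Hact : active F0 (Phi (S k)) (FU p (map (bit_prefix h0) xs))).
  { destruct HU as [[Hv HL] _]. split; [split; [auto | simpl; rewrite length_map; auto]|].
    exists (nth n (Phi (S k)) dummy_move), (dec a). split; [apply nth_In; auto | rewrite E; auto]. }
  destruct Hh as [Hh _]. specialize (Hh _ Hact).
  rewrite height_bit_prefixes in Hh by auto. lia.
Qed.

Lemma bot_probe F0 Phi p xs j :
  is_play F0 Phi -> politeral_unit F0 (U p xs) -> xs <> [] ->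
  exists h k n a, j < h /\ n < length (Phi k) /\
    nth n (Phi k) dummy_move = (Bot, faddr (FU p (map (bit_prefix h) xs)) ++ dec a) /\
    least_unused F0 (firstn n (Phi k)) a.
Proof.
  intros HP HU Hne.
  destruct (prompt_height_exists F0 (Phi (S j))) as [h Hh].
  pose proof (prompt_heights_grow _ _ _ _ _ _ HP HU Hne Hh).
  destruct (bot_moves_in_prompt _ _ _ _ _ _ HP HU Hne Hh) as (n & a & ?).
  exists h, (S (S j)), n, a. split; [lia | auto].
Qed.

Lemma Forall2_nth_rel {X Y} (R : X -> Y -> Prop) l1 l2 i d1 d2 :
  Forall2 R l1 l2 -> i < length l1 -> R (nth i l1 d1) (nth i l2 d2).
Proof.
  intros F. revert i. induction F as [|a b l1 l2 Hab F IH]; intros [|i] Hi; simpl in *;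
    auto; try lia. apply IH. lia.
Qed.

Lemma cut_determines_bits h xs xs' i j d :
  Forall2 is_prefix (map (bit_prefix h) xs) xs' -> i < length xs -> j < h ->
  nth i xs d j = nth i xs' d j.
Proof.
  intros F Hi Hj.
  pose proof (Forall2_nth_rel _ _ _ i [] d F ltac:(rewrite length_map; auto)) as Hpi.
  rewrite (nth_indep _ [] (bit_prefix h d)), map_nth in Hpi by (rewrite length_map; auto).
  pose proof (bit_prefix_is_prefix h (nth i xs d) j) as A.
  specialize (Hpi j). rewrite bit_prefix_length in A, Hpi.
  rewrite <- A, Hpi by lia. reflexivity.
Qed.

(* For each
   position j, bot's probe of L at some height beyond j is visible in L',
   so by freshness it is made in a cut of L' as well, and the cuts coincide. *)
Lemma politeral_unit_determined F0 Phi L L' :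
  is_play F0 Phi -> politeral_unit F0 L -> politeral_unit F0 L' -> upath L = upath L' ->
  (forall a, proj_unit Phi L (Bot, dec a) -> proj_unit Phi L' (Bot, dec a)) -> L = L'.
Proof.
  intros HP HU HU' Hp Hproj.
  destruct L as [p xs], L' as [p' xs']. simpl in Hp. subst p'.
  pose proof (unit_tuple_length _ _ (proj1 HU)) as LX.
  pose proof (unit_tuple_length _ _ (proj1 HU')) as LX'.
  simpl in LX, LX'. unfold proj_unit in Hproj; simpl in Hproj. f_equal.
  destruct xs as [|x0 xs0] eqn:Exs.
  { destruct xs'; simpl in *; auto; lia. }
  rewrite <- Exs in *. assert (Hne : xs <> []) by (rewrite Exs; discriminate).
  clear x0 xs0 Exs.
  apply nth_ext with (d := fun _ => false) (d' := fun _ => false); [lia|].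
  intros i Hi. apply functional_extensionality. intros j.
  destruct (bot_probe _ _ _ _ j HP HU Hne) as (h & k & n & a & Hjh & Hn & E & Ha).
  assert (Hvis : proj (omega Phi) p xs (Bot, dec a)).
  { apply (proj_intro _ _ _ (map (bit_prefix h) xs));
      [rewrite length_map; auto | apply bit_prefixes_are_prefixes |].
    exists k. cbv [faddr fpath ftup] in E. rewrite <- E. apply nth_In; auto. }
  destruct (proj_elim _ _ _ _ _ (Hproj _ Hvis) LX') as (us' & F' & Hom).
  assert (Hus : us' = map (bit_prefix h) xs).
  { apply (addr_inj p); [rewrite (Forall2_length F'); lia | rewrite length_map; auto |].
    apply (fresh_move_unique F0 Phi k n _ a (FU p us') HP Hn E Ha); auto.
    - destruct HU as [[Hv HL] Hl]. split; auto. split; auto. simpl. rewrite length_map. auto.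
    - destruct HU' as [[Hv HL] Hl]. split; auto. split; auto.
      simpl. rewrite (Forall2_length F'). auto. }
  subst us'. apply (cut_determines_bits h); auto.
Qed.

Lemma opposite_unique F0 Phi L L' M : is_play F0 Phi ->
  opposite F0 Phi L M -> opposite F0 Phi L' M -> upath L = upath L' -> L = L'.
Proof.
  intros HP (HL & _ & _ & P1) (HL' & _ & _ & P2) Ep.
  apply (politeral_unit_determined F0 Phi); auto.
  intros a Ha. apply P2, P1, Ha.
Qed.

(* The code of a visibility chain records, for each link, the paths of L_i,
   of M_i and of the unit through which M_i strictly drives L_(i+1). *)
Definition code := list (list dir * list dir * list dir).

Fixpoint chain_code (F0 : formula) (A : resolution) (c : list (unt * unt)) (cd : code)
    : Prop :=
  match c, cd with
  | [], [] => True
  | (L, M) :: c', (pl, pm, ph) :: cd' =>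
      upath L = pl /\ upath M = pm /\
      (match c' with
       | [] => True
       | (L', _) :: _ => exists H, upath H = ph /\ drives F0 M L' H /\ resolved_below F0 A M H
       end) /\ chain_code F0 A c' cd'
  | _, _ => False
  end.

Lemma chain_code_exists F0 Phi A c : chain_ok F0 Phi A c -> exists cd, chain_code F0 A c cd.
Proof.
  induction c as [|[L M] c IH]; simpl; intros H; [exists []; auto|].
  destruct H as (_ & Hd & Hc). destruct (IH Hc) as [cd Hcd].
  destruct c as [|[L' M'] c'].
  - exists [(upath L, upath M, [])]. simpl. auto.
  - destruct Hd as [H [HD HS]]. exists ((upath L, upath M, upath H) :: cd). simpl.
    repeat split; eauto.
Qed.

(* A visibility chain is determined by its tail and its code: reading the
   chain backwards, the driving unit H is fixed by L_(i+1) and its path,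
   M_i by H (driver_unique), and L_i by M_i (opposite_unique). *)
Lemma chain_determined F0 Phi A J : is_play F0 Phi -> forall c c' cd,
  chain_ok F0 Phi A c -> chain_ok F0 Phi A c' ->
  chain_code F0 A c cd -> chain_code F0 A c' cd -> c <> [] ->
  snd (last c (J, J)) = J -> snd (last c' (J, J)) = J -> c = c'.
Proof.
  intros HP c. induction c as [|[L M] c IH]; intros c' cd Hc Hc' Hd Hd' Hne EJ EJ'; [congruence|].
  destruct cd as [|[[pl pm] ph] cd]; [destruct Hd|].
  destruct c' as [|[L' M'] c']; [destruct Hd'|].
  destruct Hd as (E1 & E2 & Hdr & Hd), Hd' as (E1' & E2' & Hdr' & Hd').
  destruct Hc as (Op & _ & Hc), Hc' as (Op' & _ & Hc').
  destruct c as [|[L2 M2] c2].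
  - destruct cd; [|destruct Hd]. destruct c' as [|[? ?] ?]; [|destruct Hd'].
    simpl in EJ, EJ'. subst M M'.
    rewrite (opposite_unique _ _ _ _ _ HP Op Op') by congruence. reflexivity.
  - destruct c' as [|[L2' M2'] c2']; [destruct cd as [|[[? ?] ?] ?]; destruct Hd, Hd'|].
    assert (Ec : (L2, M2) :: c2 = (L2', M2') :: c2') by (apply (IH _ cd); auto; discriminate).
    injection Ec as <- <- <-.
    destruct Hdr as (H & Eh & HD & HR), Hdr' as (H' & Eh' & HD' & HR').
    destruct Hc as ((PL2 & _) & _).
    pose proof (proj1 (proj2 Op)) as [PM _]. pose proof (proj1 (proj2 Op')) as [PM' _].
    assert (EH : H = H').
    { destruct HD as [[_ [S1 _]] _], HD' as [[_ [S1' _]] _].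
      apply (superunit_unique F0 L2 H H' S1 S1'); [eapply subunit_unit; eauto; apply PL2 ..|].
      congruence. }
    subst H'.
    assert (EM : M = M') by (apply (driver_unique F0 A M M' L2 H); auto; congruence).
    subst M'. rewrite (opposite_unique _ _ _ _ _ HP Op Op') by congruence. reflexivity.
Qed.

Definition enumerable (T : Type) : Prop := exists e : T -> nat, forall x y, e x = e y -> x = y.

Lemma enumerable_prod X Y : enumerable X -> enumerable Y -> enumerable (X * Y).
Proof.
  intros [ex Hx] [ey Hy]. exists (fun p => Cantor.to_nat (ex (fst p), ey (snd p))).
  intros [x1 y1] [x2 y2] E. cbn [fst snd] in E.
  apply (f_equal Cantor.of_nat) in E. rewrite !Cantor.cancel_of_to in E.
  injection E as E1 E2. f_equal; auto.
Qed.

Fixpoint encode_list {X : Type} (e : X -> nat) (l : list X) : nat :=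
  match l with [] => 0 | x :: l' => S (Cantor.to_nat (e x, encode_list e l')) end.

Lemma enumerable_list X : enumerable X -> enumerable (list X).
Proof.
  intros [e He]. exists (encode_list e).
  intros l; induction l as [|x l IH]; intros [|y l'] E; try discriminate; auto.
  apply Nat.succ_inj in E. apply (f_equal Cantor.of_nat) in E. rewrite !Cantor.cancel_of_to in E.
  injection E as E1 E2. f_equal; auto.
Qed.

Lemma enumerable_dir : enumerable dir.
Proof.
  exists (fun d => match d with dL => 0 | dR => 1 | dD => 2 end).
  intros [] []; simpl; congruence.
Qed.

Lemma enumerable_code : enumerable code.
Proof.
  apply enumerable_list. repeat apply enumerable_prod; apply enumerable_list, enumerable_dir.
Qed.

Lemma countable_of_keys {T K : Type} (S : T -> Prop) (R : T -> K -> Prop) :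
  enumerable K -> (forall x, S x -> exists k, R x k) ->
  (forall x y k, S x -> S y -> R x k -> R y k -> x = y) -> countable S.
Proof.
  intros [e He] Hkey Hdet.
  exists (fun x => match ClassicalEpsilon.excluded_middle_informative (exists k, R x k) with
           | left Hx => e (proj1_sig (ClassicalEpsilon.constructive_indefinite_description _ Hx))
           | right _ => 0
           end).
  intros x y Sx Sy.
  destruct (ClassicalEpsilon.excluded_middle_informative (exists k, R x k)) as [Hx | Nx];
    [| destruct (Nx (Hkey x Sx))].
  destruct (ClassicalEpsilon.excluded_middle_informative (exists k, R y k)) as [Hy | Ny];
    [| destruct (Ny (Hkey y Sy))].
  destruct (ClassicalEpsilon.constructive_indefinite_description _ Hx) as [kx Rx].
  destruct (ClassicalEpsilon.constructive_indefinite_description _ Hy) as [ky Ry].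
  simpl. intros E. apply He in E. subst ky. eauto.
Qed.

Theorem lemma7p5 :
  forall (F0 : formula) (Phi : nat -> position),
    is_play F0 Phi -> legal_play F0 Phi ->
    forall (A : resolution) (J : unt),
      politeral_unit F0 J ->
      countable (fun I => politeral_unit F0 I /\ visibility_chain F0 Phi A I J).
Proof.
  intros F0 Phi HP _ A J _.
  (* Key of a head I: the code of some visibility chain from I to J. *)
  apply (countable_of_keys _ (fun I cd => exists c, c <> [] /\ chain_ok F0 Phi A c /\
           chain_code F0 A c cd /\ fst (hd (I, I) c) = I /\ snd (last c (J, J)) = J)).
  - exact enumerable_code.
  - intros I [_ (c & Hne & Hc & Eh & El)].
    destruct (chain_code_exists _ _ _ _ Hc) as [cd Hcd]. exists cd, c. auto.
  - intros I I' cd _ _ (c & Hne & Hc & Hd & Eh & El) (c' & _ & Hc' & Hd' & Eh' & El').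
    assert (c = c') as <- by exact (chain_determined F0 Phi A J HP c c' cd Hc Hc' Hd Hd' Hne El El').
    destruct c as [|[L M] c]; [congruence|]. simpl in Eh, Eh'. congruence.
Qed.
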